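(* If $p\in\mathbb{N}$ is odd, then there does not exist a UPB in $(\mathbb{C}^2)^{\otimes p}$ consisting of exactly $p+2$ states.
   Context: A product state in $(\mathbb{C}^2)^{\otimes p}$ is a vector $|v_1\rangle\otimes\cdots\otimes|v_p\rangle$ with each $|v_j\rangle\in\mathbb{C}^2$. A $p$-qubit unextendible product basis (UPB) is a finite set $\mathcal{S}\subseteq(\mathbb{C}^2)^{\otimes p}$ of unit product vectors that are pairwise orthogonal, such that no nonzero product vector outside $\mathcal{S}$ is orthogonal to every element of $\mathcal{S}$. The size (number of states) of a UPB is its number of elements. *)

(* The scalar field C is modelled by an arbitrary
   numClosedFieldType (algebraically closed field with complex conjugation
   Num.conj), which covers the complex numbers. *)
From HB Require Import structures.
From mathcomp Require Import all_boot all_order all_algebra.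
Set Implicit Arguments. Unset Strict Implicit. Unset Printing Implicit Defensive.
Import Order.TTheory GRing.Theory Num.Theory.
Local Open Scope ring_scope.

(* Computational basis index set of (C^2)^{⊗p}: functions 'I_p -> 'I_2. *)
Definition qidx (p : nat) := {ffun 'I_p -> 'I_2}.

(* A vector of (C^2)^{⊗p}: its coordinates in the computational basis. *)
Definition qvec (C : numClosedFieldType) (p : nat) := {ffun qidx p -> C}.

Definition qubit (C : numClosedFieldType) := {ffun 'I_2 -> C}.

Definition tensor (C : numClosedFieldType) (p : nat) (v : 'I_p -> qubit C)
  : qvec C p := [ffun x : qidx p => \prod_(j < p) v j (x j)].

Definition inner (C : numClosedFieldType) (p : nat) (a b : qvec C p) : C :=
  \sum_(x : qidx p) (a x)^* * b x.

Definition is_product (C : numClosedFieldType) (p : nat) (w : qvec C p) : Prop :=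
  exists v : 'I_p -> qubit C, w = tensor v.

Definition is_unit (C : numClosedFieldType) (p : nat) (w : qvec C p) : Prop :=
  inner w w = 1.

(* A UPB, given as a duplicate-free list S (so its number of states is size S). *)
Definition is_UPB (C : numClosedFieldType) (p : nat) (S : seq (qvec C p)) : Prop :=
  [/\ uniq S,
      (forall s, s \in S -> is_product s /\ is_unit s),
      (forall s t, s \in S -> t \in S -> s != t -> inner s t = 0) &
      (forall w, is_product w -> w != 0 -> w \notin S ->
         exists2 s, s \in S & inner s w != 0)].

From HB Require Import structures.
From mathcomp Require Import all_boot all_order all_algebra.
From mathcomp Require Import zify ring.
Set Implicit Arguments. Unset Strict Implicit. Unset Printing Implicit Defensive.
Import Order.TTheory GRing.Theory Num.Theory.

(* Of the factors of the states s_a = V a 0 (x) ... (x) V a (p-1) only two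
   relations matter: orthogonality and collinearity.  The first part of the
   file abstracts them into a [pattern]: relations [orth k] and [coll k] on the
   states, one pair per party k, obeying the geometry of C^2 (the orthogonal
   complement of a nonzero vector is a line) and the two UPB conditions.  A
   purely combinatorial argument then rules out such patterns:
   - for every party k each state a has a "mate", orthogonal to a exactly at k;
     the p mates are distinct, so exactly one further state [extra a] remains;
   - a handshake parity count shows that for every party k some state a is
     orthogonal to [extra a] exactly at k; counting then forces every state to
     be orthogonal to its extra at a single party, and at most three states to
     be orthogonal to their extra at any given party;
   - one more use of unextendibility contradicts this bound. *)

(* The orthogonality/collinearity pattern of a UPB with state set T over p
   parties: [orth k a b] (resp. [coll k a b]) says that the k-th factors of the
   states a and b are orthogonal (resp. collinear). *)
Record pattern (p : nat) (T : finType) := Pattern {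
  orth : 'I_p -> rel T;
  coll : 'I_p -> rel T;
  orthC : forall k, symmetric (orth k);
  orth_irr : forall k, irreflexive (orth k);
  coll_refl : forall k, reflexive (coll k);
  collC : forall k, symmetric (coll k);
  orth_orth_coll : forall k a b b', orth k a b -> orth k a b' -> coll k b b';
  coll_orth : forall k a a' b, coll k a a' -> orth k a b -> orth k a' b;
  orth_dist : forall a b, a != b -> exists k, orth k a b;
  unextendible : forall (is_orth : 'I_p -> bool) (b : 'I_p -> T), exists a,
    forall k, ~~ (if is_orth k then orth k a (b k) else coll k a (b k))
}.

Lemma sum_indicator (I : finType) (A : {set I}) : \sum_i (i \in A : nat) = #|A|.
Proof. by rewrite -sum1_card [RHS]big_mkcond; apply: eq_bigr => i _; case: (i \in A). Qed.

Lemma set0_neq1 (I : finType) (i : I) : set0 != [set i].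
Proof. by apply/eqP => /setP/(_ i); rewrite !inE eqxx. Qed.

Lemma handshake (I : finType) (r : rel I) : symmetric r -> irreflexive r ->
  ~~ odd (\sum_a #|[set b | r a b]|).
Proof.
move=> rC r_irr; pose lt (a b : I) := (enum_rank a < enum_rank b)%N.
have deg_split a : #|[set b | r a b]| = \sum_b ((r a b && lt a b) + (r a b && lt b a)).
  rewrite -sum1_card big_mkcond /=; apply: eq_bigr => b _; rewrite inE /lt.
  case: ltngtP => [||/val_inj/enum_rank_inj ->]; rewrite ?r_irr //; by case: (r a b).
under eq_bigr do rewrite deg_split big_split.
rewrite big_split /= [X in _ + X]exchange_big /=.
under [X in _ + X]eq_bigr => b _ do under eq_bigr => a _ do rewrite rC.
by rewrite addnn odd_double.
Qed.

Lemma sum_pos_lb p (F : 'I_p -> nat) k : (forall j, 0 < F j) -> F k + p.-1 <= \sum_j F j.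
Proof.
move=> F_pos; rewrite (bigD1 k) //= leq_add2l.
have -> : p.-1 = \sum_(j | j != k) 1 by rewrite sum1_card cardC1 card_ord.
by apply: leq_sum => j _; apply: F_pos.
Qed.

Section Pattern.
Variables (p : nat) (T : finType) (c : pattern p T).
Local Notation orth := (orth c).
Local Notation coll := (coll c).

Lemma coll_north k a b : coll k a b -> ~~ orth k a b.
Proof. by move=> hab; apply/negP => /(coll_orth hab); rewrite orth_irr. Qed.

Lemma orth_neq k a b : orth k a b -> a != b.
Proof. by apply: contraTneq => ->; rewrite orth_irr. Qed.

Definition orth_set (a b : T) : {set 'I_p} := [set k | orth k a b].

Lemma orth_setC a b : orth_set a b = orth_set b a.
Proof. by apply/setP => k; rewrite !inE orthC. Qed.

Lemma orth_set_self a : orth_set a a = set0.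
Proof. by apply/setP => k; rewrite !inE orth_irr. Qed.

(* Unextendibility against the product of the complement of a at party k and
   of a itself elsewhere yields a state orthogonal to a exactly at party k. *)
Lemma exists_mate a k : exists b, orth_set a b == [set k].
Proof.
have [b hb] := unextendible c (fun j => j != k) (fun=> a).
have only_k l : orth l b a -> l = k.
  by move=> h; apply/eqP; apply: contraTT h => hl; have := hb l; rewrite hl.
have hbk := hb k; rewrite eqxx /= in hbk.
have [j hj] : exists j, orth j b a.
  by apply: orth_dist; apply: contraNneq hbk => ->; rewrite coll_refl.
exists b; apply/eqP/setP => l; rewrite !inE orthC.
by apply/idP/eqP => [/only_k //|->]; rewrite -(only_k _ hj).
Qed.

Definition mate a k := xchoose (exists_mate a k).

Lemma orth_set_mate a k : orth_set a (mate a k) = [set k].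
Proof. exact: eqP (xchooseP (exists_mate a k)). Qed.

Lemma orth_mate a k : orth k a (mate a k).
Proof. by have /setP/(_ k) := orth_set_mate a k; rewrite !inE eqxx. Qed.

Lemma mate_inj a : injective (mate a).
Proof. by move=> k l e; apply/set1P; rewrite -(orth_set_mate a l) -e orth_set_mate set11. Qed.

Lemma mate_neq a k : mate a k != a.
Proof. by rewrite eq_sym; apply: orth_neq (orth_mate a k). Qed.

Section Extra.
Hypothesis cardT : #|T| = p.+2.

(* Besides a and its p distinct mates exactly one state is left: [extra a]. *)
Definition others a := ~: [set a] :\: [set mate a k | k : 'I_p].

Lemma card_others a : #|others a| = 1.
Proof.
have mates_sub : [set mate a k | k : 'I_p] \subset ~: [set a].
  by apply/subsetP => _ /imsetP [k _ ->]; rewrite !inE mate_neq.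
rewrite cardsD (setIidPr mates_sub) card_imset; last exact: mate_inj.
by rewrite cardsC1 cardT card_ord subSnn.
Qed.

Definition extra a := odflt a [pick b in others a].

Lemma others_extra a : others a = [set extra a].
Proof.
have /cards1P [b others_b] : #|others a| == 1 by rewrite card_others.
by rewrite /extra others_b; case: pickP => [_ /set1P -> //|/(_ b)]; rewrite set11.
Qed.

Lemma extra_neq a : extra a != a.
Proof. by have := set11 (extra a); rewrite -others_extra !inE => /andP []. Qed.

Lemma mate_neq_extra a k : mate a k != extra a.
Proof.
have := set11 (extra a); rewrite -others_extra !inE => /andP [+ _].
by apply: contraNneq => <-; apply: imset_f.
Qed.

Lemma mate_or_extra a b : b != a -> b != extra a -> exists k, b = mate a k.
Proof.
move=> ba bx; have : b \notin others a by rewrite others_extra inE.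
by rewrite !inE ba andbT negbK => /imsetP [k _ ->]; exists k.
Qed.

Lemma orth_mate_or_extra k a b : orth k a b -> b = mate a k \/ b = extra a.
Proof.
move=> hab; case: (eqVneq b (extra a)) => [->|bx]; [by right | left].
have ba : b != a by rewrite eq_sym (orth_neq hab).
have [l bl] := mate_or_extra ba bx; rewrite bl in hab *.
by congr mate; apply/esym/set1P; rewrite -(orth_set_mate a l) inE.
Qed.

(* The states that, at party k, are orthogonal to their extra; these are
   exactly the states with two distinct k-orthogonal partners. *)
Definition orth_extra k := [set a | orth k a (extra a)].

Lemma orth_extra_uniq k a b b' : a \notin orth_extra k ->
  orth k a b -> orth k a b' -> b = b'.
Proof.
rewrite inE => ha hb hb'.
case: (orth_mate_or_extra hb) => [->|bx]; last by rewrite -bx hb in ha.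
by case: (orth_mate_or_extra hb') => [->|bx]; last by rewrite -bx hb' in ha.
Qed.

Lemma mem_orth_extra k a b b' : orth k a b -> orth k a b' -> b != b' -> a \in orth_extra k.
Proof. by move=> hb hb'; apply: contraNT => ha; rewrite (orth_extra_uniq ha hb hb'). Qed.

Lemma orth_other k a b : a \in orth_extra k -> exists2 y, orth k a y & y != b.
Proof.
rewrite inE => ha; case: (eqVneq (mate a k) b) => [mb|mb].
  by exists (extra a); rewrite // -mb eq_sym mate_neq_extra.
by exists (mate a k); rewrite ?orth_mate.
Qed.

(* A k-orthogonal pair a, b inside [orth_extra k] extends to a 4-cycle y-a-b-d:
   y is a second partner of a, d of b, and y, d are orthogonal because y is
   collinear with b. *)
Lemma orth_extra_square k a b : orth k a b -> a \in orth_extra k -> b \in orth_extra k ->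
  exists y d, uniq [:: a; b; y; d] /\ {subset [:: a; b; y; d] <= orth_extra k}.
Proof.
move=> hab ha hb; have [y hy yb] := orth_other b ha; have [d hd da] := orth_other a hb.
have hyd : orth k y d by apply: coll_orth hd; apply: orth_orth_coll hab hy.
have yZ : y \in orth_extra k.
  by apply: (@mem_orth_extra k y a d); rewrite 1?eq_sym // orthC.
have dZ : d \in orth_extra k.
  by apply: (@mem_orth_extra k d b y); rewrite 1?eq_sym // orthC.
exists y, d; split; last by apply/allP; rewrite /= ha hb yZ dZ.
rewrite /= !inE !negb_or (orth_neq hab) (orth_neq hy) eq_sym da eq_sym yb.
by rewrite (orth_neq hd) (orth_neq hyd).
Qed.

Definition single_at k := [set a | orth_set a (extra a) == [set k]].

Definition single := [set a | [exists k, orth_set a (extra a) == [set k]]].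

Lemma mem_single_at k a : a \in single -> a \in orth_extra k -> a \in single_at k.
Proof.
rewrite !inE => /existsP [j /eqP hj] hk.
have : k \in orth_set a (extra a) by rewrite inE.
by rewrite hj => /set1P ->.
Qed.

(* Every state lies in [single_at k] for at most one party k. *)
Lemma sum_single_at : \sum_k #|single_at k| = #|single|.
Proof.
rewrite -sum_indicator; under eq_bigr do rewrite -sum_indicator.
rewrite exchange_big /=; apply: eq_bigr => a _; rewrite inE.
case: existsP => [[j /eqP hj]|hn].
  rewrite (bigD1 j) //= big1 ?inE ?hj ?eqxx // => l lj.
  by rewrite inE hj (inj_eq set1_inj) eq_sym (negbTE lj).
by rewrite big1 // => l _; rewrite inE; case: eqP => // h; case: hn; exists l; rewrite h.
Qed.

Lemma orth_exactly_at k a b : (orth_set a b == [set k]) =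
  (b == mate a k) || (b == extra a) && (a \in single_at k).
Proof.
case: (eqVneq b a) => [->|ba].
  rewrite orth_set_self (negbTE (set0_neq1 k)) eq_sym (negbTE (mate_neq a k)).
  by rewrite eq_sym (negbTE (extra_neq a)).
case: (eqVneq b (extra a)) => [->|bx].
  by rewrite inE [extra a == _]eq_sym (negbTE (mate_neq_extra a k)).
have [l ->] := mate_or_extra ba bx.
by rewrite orth_set_mate (inj_eq set1_inj) (inj_eq (@mate_inj a)) /= orbF.
Qed.

Lemma card_orth_exactly_at k a :
  #|[set b | orth_set a b == [set k]]| = (a \in single_at k).+1.
Proof.
have -> : [set b | orth_set a b == [set k]] =
    if a \in single_at k then [set mate a k; extra a] else [set mate a k].
  by apply/setP => b; rewrite inE orth_exactly_at; case: ifP; rewrite !inE ?andbT ?andbF ?orbF.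
by case: ifP => _; rewrite ?cards2 ?mate_neq_extra ?cards1.
Qed.

Lemma extra_extra a : a \notin single -> extra (extra a) = a.
Proof.
move=> a_single; apply/eqP; apply: contraNT a_single => hxa.
have a_xa : a != extra a by rewrite eq_sym extra_neq.
have [l al] : exists l, a = mate (extra a) l by apply: mate_or_extra; rewrite // eq_sym.
have := orth_set_mate (extra a) l; rewrite -al => mate_l.
by rewrite inE; apply/existsP; exists l; rewrite orth_setC mate_l.
Qed.

Lemma card_rest a : #|~: [set a; extra a]| = p.
Proof. by have := cardsC [set a; extra a]; rewrite cards2 eq_sym extra_neq cardT; lia. Qed.

Section OddParties.
Hypothesis p_odd : odd p.

(* Handshake on the graph "orthogonal exactly at k": its degrees are
   1 + [a \in single_at k] and there are p + 2 (odd) vertices. *)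
Lemma single_at_nonempty k : 0 < #|single_at k|.
Proof.
apply: odd_gt0; have := @handshake T (fun a b => orth_set a b == [set k]).
have -> : \sum_a #|[set b | orth_set a b == [set k]]| = #|single_at k| + p.+2.
  under eq_bigr do rewrite card_orth_exactly_at -addn1.
  by rewrite big_split /= sum_indicator sum1_card cardT.
rewrite oddD /= p_odd addbT negbK; apply.
  by move=> a b; rewrite orth_setC.
by move=> a; rewrite orth_set_self (negbTE (set0_neq1 k)).
Qed.

Lemma single_lb : p <= #|single|.
Proof.
rewrite -sum_single_at -[X in X <= _]card_ord -sum1_card.
by apply: leq_sum => k _; apply: single_at_nonempty.
Qed.

(* Two states outside [single] would be each other's extra and fill up the
   complement of [single]. *)
Lemma single_all_but_pair a : a \notin single -> single = ~: [set a; extra a].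
Proof.
move=> a_single.
have xa_single : extra a \notin single.
  have swap : orth_set (extra a) (extra (extra a)) = orth_set a (extra a).
    by rewrite extra_extra // orth_setC.
  by move: a_single; rewrite !inE swap.
have sub : single \subset ~: [set a; extra a].
  apply/subsetP => b b_single; rewrite !inE negb_or.
  by apply/andP; split; [move: a_single | move: xa_single]; apply: contraNneq => <-.
by apply/eqP; rewrite eqEcard sub card_rest single_lb.
Qed.

(* Every state is orthogonal to its extra at a single party: otherwise, with
   m = extra a and k a party where a and m are orthogonal, the 4-cycle through
   a and m puts two more states in [single_at k], and the parties' counts would
   add up to more than #|single| = p. *)
Lemma all_single a : a \in single.
Proof.
apply/contraT => a_single; set m := extra a.
have single_E := single_all_but_pair a_single.
have [k hma] := orth_dist c (extra_neq a).
have mZ : m \in orth_extra k by rewrite inE extra_extra.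
have aZ : a \in orth_extra k by rewrite inE orthC.
have [y [d [uniq_s sub_s]]] := orth_extra_square hma mZ aZ.
move: uniq_s; rewrite /= !inE !negb_or => /and4P [/and3P [_ my md] /andP [ay ad] yd _].
have in_single z : z != a -> z != m -> z \in single.
  by move=> za zm; rewrite single_E !inE negb_or za zm.
have two : 2 <= #|single_at k|.
  apply/card_geqP; exists [:: y; d]; split; rewrite //= ?inE ?yd //.
  move=> z; rewrite mem_seq2 => /orP [] /eqP ->; apply: mem_single_at;
    by [apply: in_single; rewrite eq_sym | apply: sub_s; rewrite !inE eqxx ?orbT].
have := sum_pos_lb k single_at_nonempty.
by rewrite sum_single_at single_E card_rest; have := odd_gt0 p_odd; lia.
Qed.

Lemma orth_extra_eq_single_at k : orth_extra k = single_at k.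
Proof.
apply/setP => a; apply/idP/idP; first exact: mem_single_at (all_single a).
rewrite !inE => /eqP single_k.
have : k \in orth_set a (extra a) by rewrite single_k set11.
by rewrite inE.
Qed.

(* The p + 2 states are spread over p nonempty sets [single_at k]. *)
Lemma card_orth_extra_le3 k : #|orth_extra k| <= 3.
Proof.
rewrite orth_extra_eq_single_at; have := sum_pos_lb k single_at_nonempty; rewrite sum_single_at.
have -> : single = setT by apply/setP => a; rewrite in_setT all_single.
by rewrite cardsT cardT; lia.
Qed.

Lemma orth_extra_no_edge k a b : orth k a b -> a \in orth_extra k -> b \notin orth_extra k.
Proof.
move=> hab ha; apply/negP => hb; have [y [d [uniq_s sub_s]]] := orth_extra_square hab ha hb.
have : 4 <= #|orth_extra k| by apply/card_geqP; exists [:: a; b; y; d].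
by rewrite ltnNge card_orth_extra_le3.
Qed.

Lemma orth_set1 a b : a != b -> exists j, orth_set a b = [set j].
Proof.
move=> ab; case: (eqVneq b (extra a)) => [->|bx].
  by have := all_single a; rewrite inE => /existsP [j /eqP]; exists j.
have ba : b != a by rewrite eq_sym.
by have [l ->] := mate_or_extra ba bx; exists l; rewrite orth_set_mate.
Qed.

(* If t has a single k-orthogonal partner s and is orthogonal at another party
   i to a state u collinear with t at k, then t has two i-orthogonal partners:
   unextendibility, against "collinear with t at k, with s at i, orthogonal to
   t elsewhere", yields a state z orthogonal to t at i only, and z is not u. *)
Lemma orth_extra_transfer k i t u : i != k ->
  coll k t u -> orth i t u -> t \notin orth_extra k -> t \in orth_extra i.
Proof.
move=> ik htu otu tZ; set s := mate t k.
have [z hz] := unextendible c (fun j => (j != k) && (j != i))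
  (fun j => if j == k then t else if j == i then s else t).
have hzk := hz k; rewrite eqxx /= in hzk.
have hzi := hz i; rewrite eqxx andbF (negbTE ik) /= in hzi.
have tz : t != z by apply: contraNneq hzk => <-; rewrite coll_refl.
have [j tz_j] := orth_set1 tz.
have otz : orth j t z by have := set11 j; rewrite -tz_j inE.
case: (eqVneq j k) => [jk|jk].
  suff zs : z = s by rewrite -zs coll_refl in hzi.
  by apply: orth_extra_uniq tZ _ (orth_mate t k); rewrite -jk.
case: (eqVneq j i) => [ji|ji].
  have otz_i : orth i t z by rewrite -ji.
  apply: (mem_orth_extra otu otz_i).
  by apply: contraNneq hzk => <-; rewrite collC.
by have := hz j; rewrite jk ji (negbTE jk) (negbTE ji) /= orthC otz.
Qed.

(* Pick s in [orth_extra k]; its two k-partners t = mate s k and u = extra s are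
   collinear at k, hence orthogonal at some other party i, and outside
   [orth_extra k].  The transfer lemma puts both in [orth_extra i]: an edge. *)
Theorem no_odd_pattern : False.
Proof.
pose k := Ordinal (odd_gt0 p_odd).
have /card_gt0P [s sZ] : 0 < #|orth_extra k| by rewrite orth_extra_eq_single_at single_at_nonempty.
set t := mate s k; set u := extra s.
have ost : orth k s t by apply: orth_mate.
have osu : orth k s u by move: sZ; rewrite inE.
have htu : coll k t u := orth_orth_coll ost osu.
have [i otu] := orth_dist c (mate_neq_extra s k : t != u).
have ik : i != k by apply: contraTneq otu => ->; apply: coll_north.
have tZ := orth_extra_transfer ik htu otu (orth_extra_no_edge ost sZ).
have uZ : u \in orth_extra i.
  have hut : coll k u t by rewrite collC.
  have out : orth i u t by rewrite orthC.
  exact: orth_extra_transfer ik hut out (orth_extra_no_edge osu sZ).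
by have := orth_extra_no_edge otu tZ; rewrite uZ.
Qed.

End OddParties.
End Extra.
End Pattern.

Local Open Scope ring_scope.

Section QubitGeometry.
Variable C : numClosedFieldType.
Implicit Types a b x y z w : qubit C.

Definition qdot a b : C := \sum_(i < 2) (a i)^* * b i.

Definition qdet a b : C := a ord0 * b ord_max - a ord_max * b ord0.

Definition qperp a : qubit C :=
  [ffun i : 'I_2 => if i == ord0 then (a ord_max)^* else - (a ord0)^*].

Lemma qdotE a b : qdot a b = (a ord0)^* * b ord0 + (a ord_max)^* * b ord_max.
Proof.
rewrite /qdot big_ord_recr big_ord1.
by have -> : widen_ord (leqnSn 1) ord0 = ord0 :> 'I_2 by apply: val_inj.
Qed.

Lemma qubit_neq0 a : a != 0 -> (a ord0 != 0) || (a ord_max != 0).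
Proof.
apply: contraNT; rewrite negb_or !negbK => /andP [/eqP a0 /eqP a1].
apply/eqP/ffunP => i; rewrite ffunE.
by have [->|->] : i = ord0 \/ i = ord_max by case: i => [[|[|//]]] ?; [left|right]; apply: val_inj.
Qed.

Lemma qdotC a b : qdot b a = (qdot a b)^*.
Proof. by rewrite !qdotE rmorphD !rmorphM /= !conjCK mulrC [X in _ + X]mulrC. Qed.

Lemma qdot_self_neq0 a : a != 0 -> qdot a a != 0.
Proof.
move=> /qubit_neq0 a_nz; rewrite qdotE (mulrC (a ord0)^*) (mulrC (a ord_max)^*).
by rewrite paddr_eq0 ?mul_conjC_ge0 // !mul_conjC_eq0 negb_and.
Qed.

(* Two vectors orthogonal to the same nonzero vector are collinear: the
   coordinates of x, times qdet y z, are combinations of qdot x y, qdot x z. *)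
Lemma orth_orth_qdet x y z : x != 0 -> qdot x y = 0 -> qdot x z = 0 -> qdet y z = 0.
Proof.
rewrite !qdotE => /qubit_neq0 x_nz xy xz.
have e0 : (x ord0)^* * qdet y z =
  z ord_max * ((x ord0)^* * y ord0 + (x ord_max)^* * y ord_max) -
  y ord_max * ((x ord0)^* * z ord0 + (x ord_max)^* * z ord_max) by rewrite /qdet; ring.
have e1 : (x ord_max)^* * qdet y z =
  y ord0 * ((x ord0)^* * z ord0 + (x ord_max)^* * z ord_max) -
  z ord0 * ((x ord0)^* * y ord0 + (x ord_max)^* * y ord_max) by rewrite /qdet; ring.
rewrite xy xz !mulr0 subr0 in e0 e1.
by case/orP: x_nz => x_nz; apply/eqP; [move/eqP: e0 | move/eqP: e1];
  rewrite mulf_eq0 conjC_eq0 (negbTE x_nz).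
Qed.

Lemma qdet_orth y z w : y != 0 -> qdet y z = 0 -> qdot y w = 0 -> qdot z w = 0.
Proof.
rewrite !qdotE /qdet => /qubit_neq0 y_nz yz yw.
have yz' : (y ord0)^* * (z ord_max)^* - (y ord_max)^* * (z ord0)^* = 0.
  by rewrite -!rmorphM -rmorphB yz rmorph0.
have e0 : (y ord0)^* * ((z ord0)^* * w ord0 + (z ord_max)^* * w ord_max) =
  (z ord0)^* * ((y ord0)^* * w ord0 + (y ord_max)^* * w ord_max) +
  w ord_max * ((y ord0)^* * (z ord_max)^* - (y ord_max)^* * (z ord0)^*) by ring.
have e1 : (y ord_max)^* * ((z ord0)^* * w ord0 + (z ord_max)^* * w ord_max) =
  (z ord_max)^* * ((y ord0)^* * w ord0 + (y ord_max)^* * w ord_max) -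
  w ord0 * ((y ord0)^* * (z ord_max)^* - (y ord_max)^* * (z ord0)^*) by ring.
rewrite yw yz' !mulr0 addr0 subr0 in e0 e1.
by case/orP: y_nz => y_nz; apply/eqP; [move/eqP: e0 | move/eqP: e1];
  rewrite mulf_eq0 conjC_eq0 (negbTE y_nz).
Qed.

Lemma qdet_refl a : qdet a a = 0.
Proof. by rewrite /qdet mulrC subrr. Qed.

Lemma qdetC a b : qdet b a = - qdet a b.
Proof. by rewrite /qdet opprB mulrC [X in _ - X]mulrC. Qed.

Lemma qperp_neq0 a : a != 0 -> qperp a != 0.
Proof.
move=> /qubit_neq0; apply: contraTT; rewrite negbK negb_or => /eqP/ffunP a_perp0.
have := a_perp0 ord0; have := a_perp0 ord_max.
rewrite !ffunE /= => /eqP; rewrite oppr_eq0 conjC_eq0 => /eqP -> /eqP.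
by rewrite conjC_eq0 => /eqP ->; rewrite eqxx.
Qed.

(* Being orthogonal to [qperp b] means being collinear with b. *)
Lemma qdot_qperp a b : qdot a (qperp b) = (qdet a b)^*.
Proof. by rewrite qdotE /qdet !ffunE /= rmorphB !rmorphM /= mulrN. Qed.

End QubitGeometry.

Lemma inner_tensor (C : numClosedFieldType) p (v w : 'I_p -> qubit C) :
  inner (tensor v) (tensor w) = \prod_k qdot (v k) (w k).
Proof.
rewrite /inner /qdot bigA_distr_bigA /=.
by apply: eq_bigr => x _; rewrite !ffunE rmorph_prod -big_split.
Qed.

(* Pairwise orthogonal product vectors with nonzero factors, not all
   orthogonal to any product vector with nonzero factors, have a pattern; the
   vectors with factors V b k or qperp (V b k) express unextendibility. *)
Lemma tensor_pattern (C : numClosedFieldType) p (T : finType) (V : T -> 'I_p -> qubit C) :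
  (forall a k, V a k != 0) ->
  (forall a b, a != b -> inner (tensor (V a)) (tensor (V b)) = 0) ->
  (forall v, (forall k, v k != 0) -> exists a, inner (tensor (V a)) (tensor v) != 0) ->
  inhabited (pattern p T).
Proof.
move=> V_nz V_orth V_unext.
pose orth k a b := qdot (V a k) (V b k) == 0.
pose coll k a b := qdet (V a k) (V b k) == 0.
have orthC k : symmetric (orth k) by move=> a b; rewrite /orth qdotC conjC_eq0.
have orth_irr k : irreflexive (orth k) by move=> a; apply/negbTE/qdot_self_neq0.
have coll_refl k : reflexive (coll k) by move=> a; rewrite /coll qdet_refl.
have collC k : symmetric (coll k) by move=> a b; rewrite /coll qdetC oppr_eq0.
have orth_orth_coll k a b b' : orth k a b -> orth k a b' -> coll k b b'.
  by move=> /eqP ab /eqP ab'; apply/eqP; apply: orth_orth_qdet (V_nz a k) ab ab'.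
have coll_orth k a a' b : coll k a a' -> orth k a b -> orth k a' b.
  by move=> /eqP aa' /eqP ab; apply/eqP; apply: qdet_orth (V_nz a k) aa' ab.
have orth_dist a b : a != b -> exists k, orth k a b.
  by move=> /V_orth/eqP; rewrite inner_tensor => /prodf_eq0 [k _ hk]; exists k.
constructor; apply: (Pattern orthC orth_irr coll_refl collC orth_orth_coll coll_orth orth_dist).
move=> is_orth b; pose v k := if is_orth k then V (b k) k else qperp (V (b k) k).
have v_nz k : v k != 0 by rewrite /v; case: ifP => _; rewrite ?qperp_neq0.
have [a ha] := V_unext v v_nz; exists a => k.
move: ha; rewrite inner_tensor => /prodf_neq0 /(_ k isT).
by rewrite /v /orth /coll; case: ifP => _; rewrite ?qdot_qperp ?conjC_eq0.
Qed.

(* The factors of the states of a UPB, indexed by their positions: nonzero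
   (states are unit vectors), pairwise orthogonal as tensors, and unextendible
   (a product vector in the UPB is not orthogonal to itself). *)
Lemma upb_tensor_factors (C : numClosedFieldType) p (S : seq (qvec C p)) :
  is_UPB S -> exists V : 'I_(size S) -> 'I_p -> qubit C,
  [/\ forall a k, V a k != 0,
      forall a b, a != b -> inner (tensor (V a)) (tensor (V b)) = 0 &
      forall v, (forall k, v k != 0) -> exists a, inner (tensor (V a)) (tensor v) != 0].
Proof.
case=> S_uniq S_prod S_orth S_unext; pose s (a : 'I_(size S)) := nth 0 S a.
have s_in a : s a \in S by rewrite mem_nth.
have [V sV] : exists V, forall a, s a = tensor (V a).
  apply: (@fin_all_exists _ (fun=> 'I_p -> qubit C) (fun a v => s a = tensor v)) => a.
  by have [[v ->] _] := S_prod _ (s_in a); exists v.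
have s_onto t : t \in S -> exists a, s a = t.
  move=> tS; have t_idx : (index t S < size S)%N by rewrite index_mem.
  by exists (Ordinal t_idx); rewrite /s nth_index.
exists V; split.
- move=> a k; apply/negP => /eqP Vak.
  have := (S_prod _ (s_in a)).2; rewrite /is_unit sV inner_tensor (bigD1 k) //= Vak.
  rewrite /qdot big1 ?mul0r => [/eqP|i _]; first by rewrite eq_sym oner_eq0.
  by rewrite ffunE mulr0.
- by move=> a b ab; rewrite -!sV S_orth ?s_in // nth_uniq.
move=> v v_nz; set w := tensor v.
have ww : inner w w != 0 by rewrite inner_tensor; apply/prodf_neq0 => k _; apply: qdot_self_neq0.
have [wS | wS] := boolP (w \in S).
  by have [a sa] := s_onto w wS; exists a; rewrite -sV sa.
have w_nz : w != 0.
  by apply: contraNneq ww => ->; rewrite /inner big1 // => x _; rewrite ffunE mulr0.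
have [t tS tw] := S_unext w (ex_intro _ v erefl) w_nz wS.
by have [a sa] := s_onto t tS; exists a; rewrite -sV sa.
Qed.

Theorem proposition3 (C : numClosedFieldType) (p : nat) :
  odd p -> ~ exists S : seq (qvec C p), is_UPB S /\ size S = p.+2.
Proof.
move=> p_odd [S [S_upb S_size]].
have [V [V_nz V_orth V_unext]] := upb_tensor_factors S_upb.
have [c] := tensor_pattern V_nz V_orth V_unext.
by apply: (no_odd_pattern c _ p_odd); rewrite card_ord.
Qed.
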